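(* Let $X,Y$ be proper geodesically complete Gromov-hyperbolic Busemann spaces that are vertically convergent with respect to boundary points $\infty_X,\infty_Y$, with height functions $h_X,h_Y$ based at these points, and let $X\bowtie Y$ carry an admissible metric $d_\bowtie$ arising from an admissible monotone norm. For any $(x_1,y_1),(x_2,y_2)\in X\bowtie Y$, $$d_\bowtie((x_1,y_1),(x_2,y_2))\le d_X(x_1,x_2)+d_Y(y_1,y_2)+\min\{d_X(x_1,x_2),d_Y(y_1,y_2)\}.$$
   Context: Height function $h=-\beta$, $\beta(x)=\lim_{t\to\infty}[d(\gamma(t),x)-d(\gamma(t),x_0)]$ for a ray $\gamma$ representing the base point. $X\bowtie Y=\{(x,y):h_X(x)=-h_Y(y)\}$. A norm $N$ on $\mathbb{R}^2$ with $N(1,1)=1$ is admissible if $N(a,b)\ge(|a|+|b|)/2$ and monotone if non-decreasing in each coordinate on $[0,\infty)^2$. $d_\bowtie$ is the infimum over continuous paths $(\gamma_X,\gamma_Y):[0,1]\to X\bowtie Y$ of $\sup_{0=t_0<\dots<t_n=1}\sum_i N(d_X(\gamma_X(t_i),\gamma_X(t_{i+1})),d_Y(\gamma_Y(t_i),\gamma_Y(t_{i+1})))$. Busemann space and vertical convergence: as usual (distance between arc-length parametrized geodesics is convex; asymptotic rays to the base point converge after a time shift). *)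

From Stdlib Require Import Reals Lra.
From Coquelicot Require Import Coquelicot.
Open Scope R_scope.

Section Defs.
Context {X : Type} (d : X -> X -> R).

Definition is_metric : Prop :=
  (forall x y, d x y = 0 <-> x = y) /\
  (forall x y, d x y = d y x) /\
  (forall x y z, d x z <= d x y + d y z).

Definition is_open (U : X -> Prop) : Prop :=
  forall x, U x -> exists r, 0 < r /\ forall y, d x y < r -> U y.

Definition is_compact (K : X -> Prop) : Prop :=
  forall (I : Type) (U : I -> X -> Prop),
    (forall i, is_open (U i)) ->
    (forall x, K x -> exists i, U i x) ->
    exists l : list I, forall x, K x -> exists i, List.In i l /\ U i x.

Definition proper_space : Prop :=
  forall x r, is_compact (fun y => d x y <= r).

Definition geodesic_segment (g : R -> X) (x y : X) : Prop :=
  g 0 = x /\ g (d x y) = y /\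
  forall s t, 0 <= s <= d x y -> 0 <= t <= d x y -> d (g s) (g t) = Rabs (s - t).

Definition geodesic_space : Prop :=
  forall x y, exists g, geodesic_segment g x y.

(** Busemann convexity: for any two geodesic segments, affinely
    reparametrized on [0,1], the distance function is convex. *)
Definition busemann_space : Prop :=
  geodesic_space /\
  forall (c1 c2 : R -> X) (x1 y1 x2 y2 : X),
    geodesic_segment c1 x1 y1 -> geodesic_segment c2 x2 y2 ->
    forall s t l, 0 <= s <= 1 -> 0 <= t <= 1 -> 0 <= l <= 1 ->
      d (c1 (((1 - l) * s + l * t) * d x1 y1)) (c2 (((1 - l) * s + l * t) * d x2 y2))
      <= (1 - l) * d (c1 (s * d x1 y1)) (c2 (s * d x2 y2))
         + l * d (c1 (t * d x1 y1)) (c2 (t * d x2 y2)).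

Definition geodesically_complete : Prop :=
  forall (g : R -> X) x y, geodesic_segment g x y ->
    exists l : R -> X, (forall s t, d (l s) (l t) = Rabs (s - t)) /\
                       (forall s, 0 <= s <= d x y -> l s = g s).

Definition gromov_product (x y w : X) : R := (d x w + d y w - d x y) / 2.

Definition gromov_hyperbolic : Prop :=
  exists delta, 0 <= delta /\
    forall x y z w,
      gromov_product x z w >= Rmin (gromov_product x y w) (gromov_product y z w) - delta.

(** geodesic ray [0,+oo) -> X (values on negative times are irrelevant) *)
Definition geodesic_ray (g : R -> X) : Prop :=
  forall s t, 0 <= s -> 0 <= t -> d (g s) (g t) = Rabs (s - t).

Definition asymptotic_rays (g1 g2 : R -> X) : Prop :=
  exists C, forall t, 0 <= t -> d (g1 t) (g2 t) <= C.

(** vertical convergence w.r.t. the boundary point represented by the ray gam *)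
Definition vertically_convergent (gam : R -> X) : Prop :=
  forall k1 k2, geodesic_ray k1 -> geodesic_ray k2 ->
    asymptotic_rays k1 gam -> asymptotic_rays k2 gam ->
    exists tau, forall eps, 0 < eps -> exists T, forall t, T <= t ->
      d (k1 t) (k2 (t + tau)) < eps.

Definition busemann_fun (gam : R -> X) (x : X) : R :=
  real (Lim (fun t => d (gam t) x - d (gam t) (gam 0)) p_infty).

Definition height (gam : R -> X) (x : X) : R := - busemann_fun gam x.

Definition continuous_on01 (p : R -> X) : Prop :=
  forall s, 0 <= s <= 1 -> forall eps, 0 < eps -> exists del, 0 < del /\
    forall s', 0 <= s' <= 1 -> Rabs (s - s') < del -> d (p s) (p s') < eps.

End Defs.

Definition is_norm2 (N : R -> R -> R) : Prop :=
  (forall a b, 0 <= N a b) /\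
  (forall a b, N a b = 0 <-> (a = 0 /\ b = 0)) /\
  (forall l a b, N (l * a) (l * b) = Rabs l * N a b) /\
  (forall a b a' b', N (a + a') (b + b') <= N a b + N a' b').

Definition admissible_norm (N : R -> R -> R) : Prop :=
  is_norm2 N /\ N 1 1 = 1 /\ (forall a b, N a b >= (Rabs a + Rabs b) / 2).

Definition monotone_norm (N : R -> R -> R) : Prop :=
  forall a b a' b', 0 <= a <= a' -> 0 <= b <= b' -> N a b <= N a' b'.

Definition in_hprod {X Y : Type} (dX : X -> X -> R) (dY : Y -> Y -> R)
  (gX : R -> X) (gY : R -> Y) (x : X) (y : Y) : Prop :=
  height dX gX x = - height dY gY y.

Fixpoint psum (f : nat -> R) (n : nat) : R :=
  match n with O => 0 | S k => psum f k + f k end.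

Definition path_length {X Y : Type} (dX : X -> X -> R) (dY : Y -> Y -> R)
  (N : R -> R -> R) (pX : R -> X) (pY : R -> Y) : Rbar :=
  Lub_Rbar (fun s => exists (n : nat) (t : nat -> R),
     t O = 0 /\ t n = 1 /\ (forall i, (i < n)%nat -> t i < t (S i)) /\
     s = psum (fun i => N (dX (pX (t i)) (pX (t (S i)))) (dY (pY (t i)) (pY (t (S i))))) n).

Definition d_hprod {X Y : Type} (dX : X -> X -> R) (dY : Y -> Y -> R)
  (gX : R -> X) (gY : R -> Y) (N : R -> R -> R) (x1 : X) (y1 : Y) (x2 : X) (y2 : Y) : Rbar :=
  Glb_Rbar (fun r => exists (pX : R -> X) (pY : R -> Y),
     continuous_on01 dX pX /\ continuous_on01 dY pY /\
     (forall s, 0 <= s <= 1 -> in_hprod dX dY gX gY (pX s) (pY s)) /\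
     pX 0 = x1 /\ pY 0 = y1 /\ pX 1 = x2 /\ pY 1 = y2 /\
     path_length dX dY N pX pY = Finite r).

(* Say d_X(x1,x2) <= d_Y(y1,y2).  Follow a geodesic from x1 to x2 in X while the
   Y-coordinate moves along a vertical geodesic through y1, so that the heights stay
   opposite; Busemann functions being 1-Lipschitz, both coordinates move at unit speed and
   Y ends at some y1' with d_Y(y1,y1') <= d_X(x1,x2).  Then follow a geodesic from y1' to y2,
   compensating in X along a vertical line through x2.  For a monotone norm with
   N(c,c) = c, a path whose two coordinates are 1-Lipschitz in a parameter of range L has
   N-length at most L, here L <= 2 d_X(x1,x2) + d_Y(y1,y2).
   Vertical lines exist because from any point one can move up (along geodesics to far ray
   points) and down (extending geodesics coming from far ray points, controlled by Busemann
   convexity) by exactly any amount: the approximate statements become exact by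
   compactness of closed balls. *)

From Stdlib Require Import Reals Lra Lia Classical List.
From Coquelicot Require Import Coquelicot.
Open Scope R_scope.

Lemma exists_nat_ge (x : R) : exists n : nat, x <= INR n.
Proof.
  destruct (Rle_lt_dec 0 x) as [Hx|Hx].
  - destruct (nfloor_ex x Hx) as [n Hn]. exists (S n). rewrite S_INR. lra.
  - exists O. simpl. lra.
Qed.

Lemma list_nat_bounded (l : list nat) : exists m, forall i, In i l -> (i <= m)%nat.
Proof.
  induction l as [|a l [m Hm]].
  - exists O. intros i [].
  - exists (Nat.max a m). intros i [<-|Hi]; [lia|]. specialize (Hm i Hi). lia.
Qed.

Section Metric.
Context {X : Type} (d : X -> X -> R).
Hypothesis Hd : is_metric d.

Lemma dist_sym x y : d x y = d y x.
Proof. apply Hd. Qed.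

Lemma dist_triangle x y z : d x z <= d x y + d y z.
Proof. apply Hd. Qed.

Lemma dist_refl x : d x x = 0.
Proof. apply Hd. reflexivity. Qed.

Lemma dist_nonneg x y : 0 <= d x y.
Proof. pose proof (dist_triangle x y x). rewrite dist_refl, (dist_sym y x) in H. lra. Qed.

Lemma lipschitz_abs (f : X -> R) :
  (forall u v, f u - f v <= d u v) -> forall u v, Rabs (f u - f v) <= d u v.
Proof.
  intros Hf u v. apply Rabs_le. pose proof (Hf u v). pose proof (Hf v u).
  rewrite (dist_sym v u) in H0. lra.
Qed.

Definition lipschitz_on (k : R) (p : R -> X) (lo hi : R) : Prop :=
  forall r r', lo <= r <= hi -> lo <= r' <= hi -> d (p r) (p r') <= k * Rabs (r - r').

Definition path_concat (p1 p2 : R -> X) (m : R) : R -> X :=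
  fun r => if Rle_dec r m then p1 r else p2 (r - m).

Lemma path_concat_l p1 p2 m r : r <= m -> path_concat p1 p2 m r = p1 r.
Proof. unfold path_concat. destruct (Rle_dec r m); [reflexivity|lra]. Qed.

Lemma path_concat_r p1 p2 m r : p1 m = p2 0 -> m <= r -> path_concat p1 p2 m r = p2 (r - m).
Proof.
  unfold path_concat. intros Hm Hr. destruct (Rle_dec r m); [|reflexivity].
  replace r with m by lra. rewrite Rminus_diag. exact Hm.
Qed.

Lemma lipschitz_on_concat k p1 p2 lo m hi :
  p1 m = p2 0 -> lo <= m -> 0 <= hi ->
  lipschitz_on k p1 lo m -> lipschitz_on k p2 0 hi ->
  lipschitz_on k (path_concat p1 p2 m) lo (m + hi).
Proof.
  intros Hm Hlo Hhi L1 L2.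
  assert (Hle : forall r r', lo <= r <= r' -> r' <= m + hi ->
     d (path_concat p1 p2 m r) (path_concat p1 p2 m r') <= k * Rabs (r - r')).
  { intros r r' Hr Hr'.
    destruct (Rle_or_lt r' m) as [H'|H'].
    - rewrite !path_concat_l by lra. apply L1; lra.
    - rewrite (path_concat_r _ _ _ r') by (auto; lra).
      destruct (Rle_or_lt r m) as [H|H].
      + rewrite path_concat_l by lra.
        pose proof (dist_triangle (p1 r) (p1 m) (p2 (r' - m))) as T.
        pose proof (L1 r m ltac:(lra) ltac:(lra)) as A.
        pose proof (L2 0 (r' - m) ltac:(lra) ltac:(lra)) as B.
        rewrite Hm in T, A. rewrite Rabs_left1 in A, B |- * by lra.
        assert (E : k * - (r - r') = k * - (r - m) + k * - (0 - (r' - m))) by ring.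
        lra.
      + rewrite path_concat_r by (auto; lra).
        replace (r - r') with ((r - m) - (r' - m)) by ring. apply L2; lra. }
  intros r r' Hr Hr'. destruct (Rle_or_lt r r').
  - apply Hle; lra.
  - rewrite dist_sym, Rabs_minus_sym. apply Hle; lra.
Qed.

Lemma lipschitz_on_scale k L p : 0 <= L ->
  lipschitz_on k p 0 L -> lipschitz_on (k * L) (fun u => p (L * u)) 0 1.
Proof.
  intros HL Hp r r' Hr Hr'.
  replace (k * L * Rabs (r - r')) with (k * Rabs (L * r - L * r')).
  - apply Hp; nra.
  - rewrite <- Rmult_minus_distr_l, Rabs_mult, (Rabs_pos_eq L HL). ring.
Qed.

Lemma continuous_on01_lipschitz k p : 0 <= k -> lipschitz_on k p 0 1 -> continuous_on01 d p.
Proof.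
  intros Hk Hp s Hs eps He. exists (eps / (k + 1)). split.
  { apply Rdiv_lt_0_compat; lra. }
  intros s' Hs' Hss'.
  assert (Hsmall : k * (eps / (k + 1)) < eps).
  { apply Rmult_lt_reg_r with (k + 1); [lra|].
    replace (k * (eps / (k + 1)) * (k + 1)) with (k * eps) by (field; lra). nra. }
  pose proof (Hp s s' Hs Hs').
  assert (k * Rabs (s - s') <= k * (eps / (k + 1))) by (apply Rmult_le_compat_l; lra).
  lra.
Qed.

Lemma geodesic_segment_lipschitz g x y :
  geodesic_segment d g x y -> lipschitz_on 1 g 0 (d x y).
Proof. intros [_ [_ Hg]] r r' Hr Hr'. rewrite Hg by lra. lra. Qed.

Lemma geodesic_segment_rev g x y :
  geodesic_segment d g x y -> geodesic_segment d (fun u => g (d x y - u)) y x.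
Proof.
  intros [Hg0 [Hg1 Hg]]. unfold geodesic_segment. rewrite (dist_sym y x). split; [|split].
  - rewrite Rminus_0_r. exact Hg1.
  - rewrite Rminus_diag. exact Hg0.
  - intros s t Hs Ht. rewrite Hg by lra.
    replace (d x y - s - (d x y - t)) with (- (s - t)) by ring. apply Rabs_Ropp.
Qed.

Lemma geodesic_extend_beyond p x S :
  geodesic_space d -> geodesically_complete d -> 0 <= S ->
  exists z c, geodesic_segment d c z p /\ c S = x /\ d x z = S /\ d z p = d p x + S.
Proof.
  intros Hg Hc HS.
  destruct (Hg p x) as [g G].
  destruct (Hc g _ _ G) as [l [Hl Hlg]].
  set (L := d p x) in *.
  assert (HL : 0 <= L) by apply dist_nonneg.
  assert (Hl0 : l 0 = p) by (rewrite Hlg by lra; apply (proj1 G)).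
  assert (HlL : l L = x) by (rewrite Hlg by lra; apply (proj1 (proj2 G))).
  assert (Hzp : d (l (L + S)) p = L + S).
  { rewrite <- Hl0, Hl, Rminus_0_r. apply Rabs_pos_eq. lra. }
  exists (l (L + S)), (fun u => l (L + S - u)). split; [|split; [|split]].
  - unfold geodesic_segment. rewrite Hzp, Rminus_0_r, Rminus_diag.
    split; [reflexivity|split; [exact Hl0|]]. intros s s' _ _. rewrite Hl.
    replace (L + S - s - (L + S - s')) with (- (s - s')) by ring. apply Rabs_Ropp.
  - replace (L + S - S) with L by ring. exact HlL.
  - rewrite <- HlL, Hl. replace (L - (L + S)) with (- S) by ring.
    rewrite Rabs_Ropp. apply Rabs_pos_eq; lra.
  - exact Hzp.
Qed.

Lemma compact_lipschitz_sup_attained (K : X -> Prop) (f : X -> R) (M : R) :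
  is_compact d K -> (forall u v, f u - f v <= d u v) -> (forall z, K z -> f z <= M) ->
  (forall eps, 0 < eps -> exists z, K z /\ M - eps < f z) ->
  exists z, K z /\ f z = M.
Proof.
  intros HK Hf Hle Happ. apply NNPP. intros Hno.
  assert (Hlt : forall z, K z -> f z < M).
  { intros z Kz. destruct (Rle_lt_or_eq_dec _ _ (Hle z Kz)) as [h|h]; auto.
    exfalso. apply Hno. exists z. auto. }
  (* the sublevel sets [f < M - 1/(n+1)] would give an open cover without finite subcover *)
  set (U := fun (n : nat) (z : X) => f z < M - / (INR n + 1)).
  destruct (HK nat U) as [l Hl].
  - intros n z Hz. exists (M - / (INR n + 1) - f z). split; [unfold U in Hz; lra|].
    intros y Hy. unfold U. pose proof (Hf y z). rewrite (dist_sym y z) in H. lra.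
  - intros z Kz. specialize (Hlt z Kz).
    destruct (exists_nat_ge (/ (M - f z))) as [n Hn]. exists n. unfold U.
    assert (/ (INR n + 1) < M - f z).
    { rewrite <- (Rinv_inv (M - f z)). apply Rinv_lt_contravar.
      - apply Rmult_lt_0_compat; [apply Rinv_0_lt_compat; lra|pose proof (pos_INR n); lra].
      - lra. }
    lra.
  - destruct (list_nat_bounded l) as [m Hm].
    assert (Hpos : 0 < / (INR m + 1)) by (apply Rinv_0_lt_compat; pose proof (pos_INR m); lra).
    destruct (Happ _ Hpos) as [z [Kz Hz]].
    destruct (Hl z Kz) as [i [Hi Ui]]. unfold U in Ui.
    assert (/ (INR m + 1) <= / (INR i + 1)).
    { apply Rinv_le_contravar; [pose proof (pos_INR i); lra|].
      apply Rplus_le_compat_r, le_INR. auto. }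
    lra.
Qed.

Lemma lipschitz_reaches_level (f : X -> R) x S :
  proper_space d -> (forall u v, f u - f v <= d u v) -> 0 <= S ->
  (forall eps, 0 < eps -> exists z, d x z <= S /\ f x + S - eps <= f z) ->
  exists z, d x z = S /\ f z = f x + S.
Proof.
  intros Hp Hf HS Happ.
  destruct (compact_lipschitz_sup_attained (fun z => d x z <= S) f (f x + S))
    as [z [Hz Hfz]].
  - apply Hp.
  - exact Hf.
  - intros z Hz. pose proof (Hf z x). rewrite (dist_sym z x) in H. lra.
  - intros eps He. destruct (Happ (eps / 2)) as [z Hz]; [lra|]. exists z. lra.
  - exists z. pose proof (Hf z x). rewrite (dist_sym z x) in H. split; lra.
Qed.

Lemma lipschitz_rigid_on_segment (f : X -> R) c x z :
  (forall u v, f u - f v <= d u v) -> geodesic_segment d c x z -> f z = f x + d x z ->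
  forall r, 0 <= r <= d x z -> f (c r) = f x + r.
Proof.
  intros Hf [Hc0 [Hc1 Hc]] Hz r Hr.
  pose proof (Hf (c r) x) as A. pose proof (Hf z (c r)) as B.
  rewrite <- Hc0 in A at 2. rewrite <- Hc1 in B at 2.
  rewrite Hc in A, B by lra. rewrite Rabs_pos_eq in A by lra.
  rewrite Rabs_pos_eq in B by lra. lra.
Qed.

End Metric.

Section BusemannSpace.
Context {X : Type} (d : X -> X -> R).
Hypothesis Hd : is_metric d.
Hypothesis Hb : busemann_space d.

Lemma busemann_convex_endpoints (c1 c2 : R -> X) x1 y1 x2 y2 lam :
  geodesic_segment d c1 x1 y1 -> geodesic_segment d c2 x2 y2 -> 0 <= lam <= 1 ->
  d (c1 (lam * d x1 y1)) (c2 (lam * d x2 y2)) <= (1 - lam) * d x1 x2 + lam * d y1 y2.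
Proof.
  intros G1 G2 Hl.
  pose proof (proj2 Hb c1 c2 x1 y1 x2 y2 G1 G2 0 1 lam) as H.
  replace ((1 - lam) * 0 + lam * 1) with lam in H by ring.
  rewrite !Rmult_0_l, !Rmult_1_l in H.
  destruct G1 as [A1 [B1 _]], G2 as [A2 [B2 _]].
  rewrite A1, A2, B1, B2 in H. apply H; lra.
Qed.

Lemma geodesics_fellow_travel (c1 c2 : R -> X) z q r mu S :
  geodesic_segment d c1 z q -> geodesic_segment d c2 z r ->
  0 < d z q -> 0 <= S <= d z q -> S <= d z r -> 0 <= mu <= d z r ->
  d (c1 S) (c2 S) <= 2 * (S / d z q) * d q (c2 mu).
Proof.
  intros G1 G2 Hq HS HSr Hmu.
  destruct G2 as [G20 [G21 Giso]].
  set (th := S / d z q). set (D := d q (c2 mu)).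
  assert (Hth : 0 <= th <= 1).
  { unfold th. split; [apply Rdiv_le_0_compat; lra|].
    apply (Rdiv_le_1 S (d z q)); lra. }
  assert (thq : th * d z q = S) by (unfold th; field; lra).
  assert (Hzmu : d z (c2 mu) = mu).
  { rewrite <- G20 at 1. rewrite Giso by lra. rewrite Rminus_0_l, Rabs_Ropp. apply Rabs_pos_eq; lra. }
  assert (G2' : geodesic_segment d c2 z (c2 mu)).
  { unfold geodesic_segment. rewrite Hzmu. split; [exact G20|split; [reflexivity|]]. intros; apply Giso; lra. }
  pose proof (busemann_convex_endpoints c1 c2 z q z (c2 mu) th G1 G2' Hth) as Hc.
  rewrite (dist_refl d Hd), thq, Hzmu in Hc. fold D in Hc.
  (* [c2 (th * mu)] and [c2 S] differ by [th * |mu - d z q|], and [|mu - d z q| <= D] *)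
  assert (Hmid : d (c2 (th * mu)) (c2 S) <= th * D).
  { rewrite Giso by nra.
    replace (th * mu - S) with (th * (mu - d z q)) by (rewrite <- thq; ring).
    rewrite Rabs_mult, (Rabs_pos_eq th) by lra. apply Rmult_le_compat_l; [lra|].
    rewrite <- Hzmu. apply Rabs_le.
    pose proof (dist_triangle d Hd z q (c2 mu)). pose proof (dist_triangle d Hd z (c2 mu) q).
    rewrite (dist_sym d Hd (c2 mu) q) in H0. unfold D. lra. }
  pose proof (dist_triangle d Hd (c1 S) (c2 (th * mu)) (c2 S)). lra.
Qed.

End BusemannSpace.

Section Busemann.
Context {X : Type} (d : X -> X -> R) (gam : R -> X).
Hypothesis Hd : is_metric d.
Hypothesis Hray : geodesic_ray d gam.

Notation b := (busemann_fun d gam).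

Lemma ray_dist_origin t : 0 <= t -> d (gam t) (gam 0) = t.
Proof. intros Ht. rewrite Hray by lra. rewrite Rminus_0_r. apply Rabs_pos_eq; lra. Qed.

Lemma ray_segment t : 0 <= t -> geodesic_segment d gam (gam 0) (gam t).
Proof.
  intros Ht. unfold geodesic_segment.
  rewrite (dist_sym d Hd), ray_dist_origin by exact Ht.
  split; [reflexivity|split; [reflexivity|]]. intros s s' Hs Hs'. apply Hray; lra.
Qed.

Lemma busemann_seq_decr x n :
  d (gam (INR (S n))) x - INR (S n) <= d (gam (INR n)) x - INR n.
Proof.
  rewrite S_INR. pose proof (dist_triangle d Hd (gam (INR n + 1)) (gam (INR n)) x).
  rewrite Hray in H by (pose proof (pos_INR n); lra).
  replace (INR n + 1 - INR n) with 1 in H by ring. rewrite Rabs_R1 in H. lra.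
Qed.

Lemma is_lim_seq_busemann x : is_lim_seq (fun n => d (gam (INR n)) x - INR n) (b x).
Proof.
  set (u := fun n => d (gam (INR n)) x - INR n).
  assert (Hlow : forall n, - d x (gam 0) <= u n).
  { intros n. unfold u. rewrite <- (ray_dist_origin (INR n)) at 2 by apply pos_INR.
    pose proof (dist_triangle d Hd (gam (INR n)) x (gam 0)). lra. }
  destruct (ex_finite_lim_seq_decr u _ (busemann_seq_decr x) Hlow) as [l Hl].
  unfold busemann_fun, Lim. simpl.
  rewrite (Lim_seq_ext _ u)
    by (intros n; unfold u; rewrite ray_dist_origin by apply pos_INR; reflexivity).
  rewrite (is_lim_seq_unique u l Hl). exact Hl.
Qed.

Lemma busemann_lipschitz x y : b x - b y <= d x y.
Proof.
  assert (H : forall n, d (gam (INR n)) x - INR n <= (d (gam (INR n)) y - INR n) + d x y).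
  { intros n. pose proof (dist_triangle d Hd (gam (INR n)) y x).
    rewrite (dist_sym d Hd y x) in H. lra. }
  pose proof (is_lim_seq_le _ _ _ _ H (is_lim_seq_busemann x)
    (is_lim_seq_plus' _ _ _ _ (is_lim_seq_busemann y) (is_lim_seq_const (d x y)))) as Hle.
  simpl in Hle. lra.
Qed.

Lemma busemann_le_dist x t : 0 <= t -> b x <= d (gam t) x - t.
Proof.
  intros Ht. destruct (exists_nat_ge t) as [n Hn].
  pose proof (is_lim_seq_decr_compare _ _ (is_lim_seq_busemann x) (busemann_seq_decr x) n).
  pose proof (dist_triangle d Hd (gam (INR n)) (gam t) x).
  rewrite Hray in H0 by lra. rewrite Rabs_pos_eq in H0; lra.
Qed.

Lemma busemann_approx_far x eps T : 0 < eps ->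
  exists n : nat, T <= INR n /\ d (gam (INR n)) x - INR n < b x + eps.
Proof.
  intros He. pose proof (is_lim_seq_busemann x) as L. apply is_lim_seq_spec in L.
  destruct (L (mkposreal eps He)) as [N0 HN].
  destruct (exists_nat_ge T) as [n1 Hn1].
  exists (Nat.max N0 n1). split.
  - apply Rle_trans with (INR n1); [exact Hn1|]. apply le_INR. lia.
  - specialize (HN (Nat.max N0 n1) ltac:(lia)). apply Rabs_lt_between in HN. simpl in HN. lra.
Qed.

Lemma busemann_le_along_geodesic c z t s :
  0 <= t -> geodesic_segment d c z (gam t) -> 0 <= s <= d z (gam t) ->
  b (c s) <= d (gam t) z - t - s.
Proof.
  intros Ht [Hc0 [Hc1 Hc]] Hs.
  pose proof (busemann_le_dist (c s) t Ht).
  rewrite <- Hc1 in H at 1. rewrite Hc in H by lra.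
  rewrite Rabs_pos_eq in H by lra. rewrite (dist_sym d Hd). lra.
Qed.

Hypothesis Hb : busemann_space d.

Lemma geodesic_to_ray_passes_near c z t T :
  0 <= T <= t -> 0 < t -> geodesic_segment d c z (gam t) ->
  exists mu, 0 <= mu <= d z (gam t) /\ d (c mu) (gam T) <= d z (gam 0).
Proof.
  intros HT Ht G.
  set (L := d z (gam t)). set (lam := (t - T) / t).
  assert (Hlam : 0 <= lam <= 1).
  { unfold lam. split; [apply Rdiv_le_0_compat; lra|apply (Rdiv_le_1 (t - T) t); lra]. }
  (* convexity between the geodesic and the ray, both issued backwards from [gam t] *)
  pose proof (busemann_convex_endpoints d Hb _ _ _ _ _ _ lam
    (geodesic_segment_rev d Hd _ _ _ G)
    (geodesic_segment_rev d Hd _ _ _ (ray_segment t ltac:(lra))) Hlam) as Hc.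
  rewrite (dist_sym d Hd (gam 0) (gam t)), ray_dist_origin, (dist_refl d Hd) in Hc by lra.
  rewrite (dist_sym d Hd (gam t) z) in Hc. fold L in Hc.
  replace (t - lam * t) with T in Hc by (unfold lam; field; lra).
  pose proof (dist_nonneg d Hd z (gam t)).
  exists (L - lam * L). split; [unfold L in *; nra|].
  apply Rle_trans with (lam * d z (gam 0)); [lra|].
  pose proof (dist_nonneg d Hd z (gam 0)). nra.
Qed.

End Busemann.

Definition has_vertical_lines {X : Type} (d : X -> X -> R) (f : X -> R) : Prop :=
  forall x S, 0 <= S -> exists v : R -> X, v 0 = x /\
    (forall r, - S <= r <= S -> f (v r) = f x + r) /\ lipschitz_on d 1 v (- S) S.

Lemma vertical_lines_of_levels {X : Type} (d : X -> X -> R) (f : X -> R) :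
  is_metric d -> geodesic_space d -> (forall u v, f u - f v <= d u v) ->
  (forall x S, 0 <= S -> exists z, d x z = S /\ f z = f x + S) ->
  (forall x S, 0 <= S -> exists w, d x w = S /\ f w = f x - S) ->
  has_vertical_lines d f.
Proof.
  intros Hd Hg Hf Hdown Hup x S HS.
  destruct (Hdown x S HS) as [z [Hxz Hz]].
  destruct (Hup x S HS) as [w [Hxw Hw]].
  destruct (Hg x z) as [cd Gd]. destruct (Hg x w) as [cu Gu].
  assert (Hcd : forall r, 0 <= r <= S -> f (cd r) = f x + r).
  { intros r Hr. apply (lipschitz_rigid_on_segment d f cd x z); auto; lra. }
  assert (Hcu : forall r, 0 <= r <= S -> f (cu r) = f x - r).
  { intros r Hr.
    enough (- f (cu r) = - f x + r) by lra.
    apply (lipschitz_rigid_on_segment d (fun y => - f y) cu x w); auto; try lra.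
    intros u v. pose proof (Hf v u). rewrite (dist_sym d Hd v u) in H. lra. }
  assert (Hj : cu (- 0) = cd 0) by (rewrite Ropp_0; destruct Gu as [-> _], Gd as [-> _]; reflexivity).
  exists (path_concat (fun r => cu (- r)) cd 0). split; [|split].
  - rewrite path_concat_l by lra. rewrite Ropp_0. apply Gu.
  - intros r Hr. destruct (Rle_or_lt r 0).
    + rewrite path_concat_l by lra. rewrite Hcu; lra.
    + rewrite path_concat_r by (auto; lra). rewrite Rminus_0_r, Hcd; lra.
  - pose proof (lipschitz_on_concat d Hd 1 (fun r => cu (- r)) cd (- S) 0 S) as L.
    rewrite Rplus_0_l in L. apply L; auto; try lra.
    + intros r r' Hr Hr'. rewrite <- Rabs_Ropp.
      replace (- (r - r')) with (- r - - r') by ring.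
      apply (geodesic_segment_lipschitz d cu x w); auto; lra.
    + rewrite <- Hxz. apply (geodesic_segment_lipschitz d cd x z Gd).
Qed.

Section Horofunctions.
Context {X : Type} (d : X -> X -> R) (gam : R -> X).
Hypothesis Hd : is_metric d.
Hypothesis Hray : geodesic_ray d gam.
Hypothesis Hb : busemann_space d.

Notation b := (busemann_fun d gam).

Lemma busemann_up_approx x S eps : 0 <= S -> 0 < eps ->
  exists w, d x w <= S /\ b w <= b x - S + eps.
Proof.
  intros HS He.
  destruct (busemann_approx_far d gam Hd Hray x eps (S + d x (gam 0)) He) as [n [Hn Hx]].
  set (t := INR n) in *.
  assert (Ht : 0 <= t) by apply pos_INR.
  destruct (proj1 Hb x (gam t)) as [g G].
  assert (HL : S <= d x (gam t)).
  { pose proof (dist_triangle d Hd (gam t) x (gam 0)).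
    rewrite (ray_dist_origin d gam Hray t Ht), (dist_sym d Hd (gam t) x) in H. lra. }
  exists (g S). split.
  - destruct G as [G0 [_ Giso]]. rewrite <- G0 at 1. rewrite Giso by lra.
    rewrite Rminus_0_l, Rabs_Ropp, Rabs_pos_eq; lra.
  - pose proof (busemann_le_along_geodesic d gam Hd Hray g x t S Ht G ltac:(lra)). lra.
Qed.

Hypothesis Hcomplete : geodesically_complete d.

Lemma busemann_down_approx x S eps : 0 <= S -> 0 < eps ->
  exists z, d x z <= S /\ b x + S - eps <= b z.
Proof.
  (* [z] extends the geodesic from a ray point [gam T] through [x] by [S].  The geodesic
     from [z] to a much farther ray point [gam t] passes within [K] of [gam T], so at time
     [S] it is within [2 S K / L1] of [x], while its height there is about [b z - S].
     [T] is taken large enough to make that error at most [eps / 2]. *)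
  intros HS He.
  set (K := S + d x (gam 0)).
  assert (HK : 0 <= K) by (pose proof (dist_nonneg d Hd x (gam 0)); unfold K; lra).
  set (M := 4 * S * K / eps).
  assert (HM : 0 <= M) by (apply Rdiv_le_0_compat; nra).
  set (T := d x (gam 0) + M + 1).
  assert (HT : 0 <= T) by (pose proof (dist_nonneg d Hd x (gam 0)); unfold T; lra).
  destruct (geodesic_extend_beyond d Hd (gam T) x S (proj1 Hb) Hcomplete HS)
    as [z [c1 [C1 [Hc1S [Hxz HzT]]]]].
  set (L1 := d (gam T) x + S) in HzT.
  assert (HL1 : M + 1 <= L1).
  { pose proof (dist_triangle d Hd (gam T) x (gam 0)).
    rewrite (ray_dist_origin d gam Hray T HT) in H. unfold L1, T in *. lra. }
  assert (HzK : d z (gam 0) <= K).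
  { pose proof (dist_triangle d Hd z x (gam 0)). rewrite (dist_sym d Hd z x), Hxz in H. unfold K. lra. }
  destruct (busemann_approx_far d gam Hd Hray z (eps / 2) (T + K + S + 1) ltac:(lra))
    as [n [Hn Hz]].
  set (t := INR n) in *.
  assert (Ht : 0 <= t) by apply pos_INR.
  destruct (proj1 Hb z (gam t)) as [c2 C2].
  assert (HL2 : S <= d z (gam t)).
  { pose proof (dist_triangle d Hd (gam t) z (gam 0)).
    rewrite (ray_dist_origin d gam Hray t Ht), (dist_sym d Hd (gam t) z) in H. lra. }
  destruct (geodesic_to_ray_passes_near d gam Hd Hray Hb c2 z t T ltac:(lra) ltac:(lra) C2)
    as [mu [Hmu Hnear]].
  pose proof (geodesics_fellow_travel d Hd Hb c1 c2 z (gam T) (gam t) mu S C1 C2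
    ltac:(rewrite HzT; lra) ltac:(rewrite HzT; unfold L1; pose proof (dist_nonneg d Hd (gam T) x); lra) HL2 Hmu) as Hfel.
  rewrite Hc1S, HzT, (dist_sym d Hd (gam T)) in Hfel.
  assert (Hsmall : 2 * (S / L1) * d (c2 mu) (gam T) <= eps / 2).
  { assert (E : eps * M = 4 * S * K) by (unfold M; field; lra).
    apply Rle_trans with (2 * (S / L1) * K).
    - apply Rmult_le_compat_l; [|lra].
      apply Rmult_le_pos; [lra|apply Rdiv_le_0_compat; lra].
    - unfold Rdiv. apply Rmult_le_reg_r with L1; [lra|].
      replace (2 * (S * / L1) * K * L1) with (2 * S * K) by (field; lra). nra. }
  pose proof (busemann_le_along_geodesic d gam Hd Hray c2 z t S ltac:(lra) C2 ltac:(lra)).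
  pose proof (busemann_lipschitz d gam Hd Hray x (c2 S)).
  exists z. split; lra.
Qed.

Hypothesis Hproper : proper_space d.

Lemma busemann_has_vertical_lines : has_vertical_lines d b.
Proof.
  apply vertical_lines_of_levels; [exact Hd|exact (proj1 Hb)|apply busemann_lipschitz; auto|..].
  - intros x S HS. apply (lipschitz_reaches_level d Hd b x S Hproper); auto.
    + apply busemann_lipschitz; auto.
    + intros eps He. apply busemann_down_approx; auto.
  - intros x S HS.
    destruct (lipschitz_reaches_level d Hd (fun y => - b y) x S Hproper) as [w Hw]; auto.
    + intros u v. pose proof (busemann_lipschitz d gam Hd Hray v u).
      rewrite (dist_sym d Hd v u) in H. lra.
    + intros eps He. destruct (busemann_up_approx x S eps HS He) as [w Hw].
      exists w. lra.
    + exists w. lra.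
Qed.

End Horofunctions.

Section CompensatedGeodesic.
Context {X Y : Type} (dX : X -> X -> R) (dY : Y -> Y -> R) (bX : X -> R) (bY : Y -> R).
Hypothesis HdX : is_metric dX.
Hypothesis HgX : geodesic_space dX.
Hypothesis HbX : forall u v, bX u - bX v <= dX u v.
Hypothesis HvY : has_vertical_lines dY bY.

(* The Y-coordinate moves along a vertical line so that the height [bX + bY] stays zero. *)
Lemma compensated_geodesic x x' y : bX x + bY y = 0 ->
  exists (pX : R -> X) (pY : R -> Y),
    pX 0 = x /\ pY 0 = y /\ pX (dX x x') = x' /\ (bX x' = bX x -> pY (dX x x') = y) /\
    lipschitz_on dX 1 pX 0 (dX x x') /\ lipschitz_on dY 1 pY 0 (dX x x') /\
    forall r, 0 <= r <= dX x x' -> bX (pX r) + bY (pY r) = 0.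
Proof.
  intros Hxy.
  destruct (HgX x x') as [c G].
  destruct (HvY y (dX x x') (dist_nonneg dX HdX x x')) as [v [Hv0 [Hvh Hvl]]].
  destruct G as [G0 [G1 Giso]].
  assert (Hdrop : forall r, 0 <= r <= dX x x' -> - dX x x' <= bX x - bX (c r) <= dX x x').
  { intros r Hr. pose proof (lipschitz_abs dX HdX bX HbX x (c r)) as H.
    rewrite <- G0 in H at 2.
    rewrite (dist_sym dX HdX), Giso, Rminus_0_r, (Rabs_pos_eq r) in H by lra.
    apply Rabs_le_between. lra. }
  exists c, (fun r => v (bX x - bX (c r))).
  split; [exact G0|split; [|split; [exact G1|split; [|split; [|split]]]]].
  - rewrite G0, Rminus_diag. exact Hv0.
  - intros E. rewrite G1, E, Rminus_diag. exact Hv0.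
  - apply (geodesic_segment_lipschitz dX c x x'). split; auto.
  - intros r r' Hr Hr'. eapply Rle_trans; [apply Hvl; apply Hdrop; auto|].
    rewrite !Rmult_1_l, <- (Giso r r') by lra.
    replace (bX x - bX (c r) - (bX x - bX (c r'))) with (bX (c r') - bX (c r)) by ring.
    rewrite (dist_sym dX HdX). apply lipschitz_abs; auto.
  - intros r Hr. rewrite Hvh by (apply Hdrop; auto). lra.
Qed.

End CompensatedGeodesic.

Section HprodPath.
Context {X Y : Type} (dX : X -> X -> R) (dY : Y -> Y -> R) (bX : X -> R) (bY : Y -> R).
Hypothesis HdX : is_metric dX.
Hypothesis HdY : is_metric dY.
Hypothesis HgX : geodesic_space dX.
Hypothesis HgY : geodesic_space dY.
Hypothesis HbX : forall u v, bX u - bX v <= dX u v.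
Hypothesis HbY : forall u v, bY u - bY v <= dY u v.
Hypothesis HvX : has_vertical_lines dX bX.
Hypothesis HvY : has_vertical_lines dY bY.

(* First move x1 to x2 (compensating in Y, which reaches some y1' with
   dY y1 y1' <= dX x1 x2), then move y1' to y2 (compensating in X). *)
Lemma hprod_path x1 y1 x2 y2 : bX x1 + bY y1 = 0 -> bX x2 + bY y2 = 0 ->
  exists (L : R) (pX : R -> X) (pY : R -> Y),
    0 <= L <= 2 * dX x1 x2 + dY y1 y2 /\
    pX 0 = x1 /\ pY 0 = y1 /\ pX L = x2 /\ pY L = y2 /\
    lipschitz_on dX 1 pX 0 L /\ lipschitz_on dY 1 pY 0 L /\
    forall r, 0 <= r <= L -> bX (pX r) + bY (pY r) = 0.
Proof.
  intros E1 E2. set (a := dX x1 x2).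
  assert (Ha : 0 <= a) by apply (dist_nonneg dX HdX).
  destruct (compensated_geodesic dX dY bX bY HdX HgX HbX HvY x1 x2 y1 E1)
    as [p1X [p1Y [P1X0 [P1Y0 [P1Xa [_ [L1X [L1Y H1]]]]]]]].
  fold a in P1Xa, L1X, L1Y, H1.
  set (y1' := p1Y a).
  assert (E1' : bY y1' + bX x2 = 0) by (pose proof (H1 a ltac:(lra)); rewrite P1Xa in H; unfold y1'; lra).
  destruct (compensated_geodesic dY dX bY bX HdY HgY HbY HvX y1' y2 x2 E1')
    as [q2Y [q2X [Q2Y0 [Q2X0 [Q2Yb [Q2Xb [L2Y [L2X H2]]]]]]]].
  set (b' := dY y1' y2) in *.
  assert (Hb' : 0 <= b') by apply (dist_nonneg dY HdY).
  assert (Hb'le : b' <= a + dY y1 y2).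
  { pose proof (dist_triangle dY HdY y1' y1 y2).
    pose proof (L1Y a 0 ltac:(lra) ltac:(lra)).
    rewrite P1Y0, Rminus_0_r, Rabs_pos_eq, Rmult_1_l in H0 by lra. fold y1' in H0. unfold b'. lra. }
  assert (JX : p1X a = q2X 0) by (rewrite P1Xa, Q2X0; reflexivity).
  assert (JY : p1Y a = q2Y 0) by (rewrite Q2Y0; reflexivity).
  exists (a + b'), (path_concat p1X q2X a), (path_concat p1Y q2Y a).
  split; [lra|split; [|split; [|split; [|split; [|split; [|split]]]]]].
  - rewrite path_concat_l by lra. exact P1X0.
  - rewrite path_concat_l by lra. exact P1Y0.
  - rewrite path_concat_r by (auto; lra). replace (a + b' - a) with b' by ring.
    apply Q2Xb. lra.
  - rewrite path_concat_r by (auto; lra). replace (a + b' - a) with b' by ring. exact Q2Yb.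
  - apply lipschitz_on_concat; auto; lra.
  - apply lipschitz_on_concat; auto; lra.
  - intros r Hr. destruct (Rle_or_lt r a).
    + rewrite !path_concat_l by lra. apply H1; lra.
    + rewrite !path_concat_r by (auto; lra). rewrite Rplus_comm. apply H2; lra.
Qed.

End HprodPath.

Lemma admissible_norm_diag (N : R -> R -> R) :
  admissible_norm N -> forall c, 0 <= c -> N c c = c.
Proof.
  intros [[_ [_ [Hhom _]]] [H11 _]] c Hc.
  pose proof (Hhom c 1 1) as H. rewrite !Rmult_1_r, H11, Rmult_1_r in H.
  rewrite H. apply Rabs_pos_eq; exact Hc.
Qed.

Lemma psum_telescope (f : nat -> R) n : psum (fun i => f (S i) - f i) n = f n - f O.
Proof. induction n as [|n IH]; simpl; [ring|rewrite IH; ring]. Qed.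

Lemma psum_le (f g : nat -> R) n :
  (forall i, (i < n)%nat -> f i <= g i) -> psum f n <= psum g n.
Proof.
  induction n as [|n IH]; intros H; simpl; [lra|].
  apply Rplus_le_compat; [apply IH; intros; apply H; lia|apply H; lia].
Qed.

Lemma partition_in_unit (t : nat -> R) n :
  t O = 0 -> t n = 1 -> (forall i, (i < n)%nat -> t i < t (S i)) ->
  forall i, (i <= n)%nat -> 0 <= t i <= 1.
Proof.
  intros H0 Hn Hinc.
  assert (Hmono : forall i j, (i <= j <= n)%nat -> t i <= t j).
  { intros i j Hij. induction j as [|j IH].
    - replace i with O by lia. lra.
    - destruct (Nat.eq_dec i (S j)) as [->|Hne]; [lra|].
      pose proof (Hinc j ltac:(lia)). specialize (IH ltac:(lia)). lra. }
  intros i Hi. rewrite <- H0, <- Hn. split; apply Hmono; lia.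
Qed.

Section PathLength.
Context {X Y : Type} (dX : X -> X -> R) (dY : Y -> Y -> R) (N : R -> R -> R).
Hypothesis HdX : is_metric dX.
Hypothesis HdY : is_metric dY.
Hypothesis Hmono : monotone_norm N.
Hypothesis Hdiag : forall c, 0 <= c -> N c c = c.

Lemma path_length_lipschitz k pX pY :
  lipschitz_on dX k pX 0 1 -> lipschitz_on dY k pY 0 1 ->
  exists r, path_length dX dY N pX pY = Finite r /\ r <= k.
Proof.
  intros LX LY.
  set (E := fun s => exists (n : nat) (t : nat -> R),
     t O = 0 /\ t n = 1 /\ (forall i, (i < n)%nat -> t i < t (S i)) /\
     s = psum (fun i => N (dX (pX (t i)) (pX (t (S i)))) (dY (pY (t i)) (pY (t (S i))))) n).
  assert (Hub : is_ub_Rbar E k).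
  { intros s [n [t [T0 [Tn [Tinc ->]]]]]. simpl.
    (* each term is at most N (k Δt) (k Δt) = k Δt, which telescopes to k *)
    replace k with (psum (fun i => k * t (S i) - k * t i) n)
      by (rewrite (psum_telescope (fun i => k * t i)), T0, Tn; ring).
    apply psum_le. intros i Hi.
    pose proof (partition_in_unit t n T0 Tn Tinc i ltac:(lia)).
    pose proof (partition_in_unit t n T0 Tn Tinc (S i) ltac:(lia)).
    pose proof (Tinc i Hi).
    pose proof (LX (t i) (t (S i)) ltac:(lra) ltac:(lra)).
    pose proof (LY (t i) (t (S i)) ltac:(lra) ltac:(lra)).
    rewrite Rabs_left1, Ropp_minus_distr in H2, H3 by lra.
    pose proof (dist_nonneg dX HdX (pX (t i)) (pX (t (S i)))).
    pose proof (dist_nonneg dY HdY (pY (t i)) (pY (t (S i)))).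
    rewrite <- (Hdiag (k * t (S i) - k * t i)) by lra.
    apply Hmono; lra. }
  assert (Hone : E (N (dX (pX 0) (pX 1)) (dY (pY 0) (pY 1)) + 0)).
  { exists 1%nat, (fun i => match i with O => 0 | _ => 1 end).
    split; [reflexivity|split; [reflexivity|split]].
    - intros i Hi. replace i with O by lia. simpl. lra.
    - simpl. ring. }
  destruct (Lub_Rbar_correct E) as [Hl Hlub].
  specialize (Hlub k Hub). specialize (Hl _ Hone).
  unfold path_length. fold E.
  destruct (Lub_Rbar E) as [r| |]; simpl in *; try contradiction.
  exists r. split; [reflexivity|exact Hlub].
Qed.

Lemma d_hprod_le_lipschitz_path (gX : R -> X) (gY : R -> Y) x1 y1 x2 y2 L
    (pX : R -> X) (pY : R -> Y) :
  0 <= L -> lipschitz_on dX 1 pX 0 L -> lipschitz_on dY 1 pY 0 L ->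
  (forall r, 0 <= r <= L -> busemann_fun dX gX (pX r) + busemann_fun dY gY (pY r) = 0) ->
  pX 0 = x1 -> pY 0 = y1 -> pX L = x2 -> pY L = y2 ->
  Rbar_le (d_hprod dX dY gX gY N x1 y1 x2 y2) (Finite L).
Proof.
  intros HL LX LY Hh P0 Q0 PL QL.
  set (qX := fun u => pX (L * u)). set (qY := fun u => pY (L * u)).
  assert (LqX : lipschitz_on dX L qX 0 1).
  { rewrite <- (Rmult_1_l L) at 1. apply lipschitz_on_scale; auto. }
  assert (LqY : lipschitz_on dY L qY 0 1).
  { rewrite <- (Rmult_1_l L) at 1. apply lipschitz_on_scale; auto. }
  destruct (path_length_lipschitz L qX qY LqX LqY) as [r [Hr HrL]].
  eapply Rbar_le_trans; [apply (proj1 (Glb_Rbar_correct _))|simpl; exact HrL].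
  exists qX, qY.
  split; [apply (continuous_on01_lipschitz dX L); auto|].
  split; [apply (continuous_on01_lipschitz dY L); auto|].
  unfold qX, qY. rewrite !Rmult_0_r, !Rmult_1_r.
  repeat split; auto.
  intros s Hs. unfold in_hprod, height. pose proof (Hh (L * s) ltac:(nra)). lra.
Qed.

End PathLength.

Theorem mainTheorem6 (X Y : Type) (dX : X -> X -> R) (dY : Y -> Y -> R)
  (gX : R -> X) (gY : R -> Y) (N : R -> R -> R) :
  is_metric dX -> proper_space dX -> busemann_space dX ->
  geodesically_complete dX -> gromov_hyperbolic dX ->
  geodesic_ray dX gX -> vertically_convergent dX gX ->
  is_metric dY -> proper_space dY -> busemann_space dY ->
  geodesically_complete dY -> gromov_hyperbolic dY ->
  geodesic_ray dY gY -> vertically_convergent dY gY ->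
  admissible_norm N -> monotone_norm N ->
  forall (x1 x2 : X) (y1 y2 : Y),
    in_hprod dX dY gX gY x1 y1 -> in_hprod dX dY gX gY x2 y2 ->
    Rbar_le (d_hprod dX dY gX gY N x1 y1 x2 y2)
      (Finite (dX x1 x2 + dY y1 y2 + Rmin (dX x1 x2) (dY y1 y2))).
Proof.
  intros HdX HpX HbX HcX _ HrX _ HdY HpY HbY HcY _ HrY _ Hadm Hmono x1 x2 y1 y2 E1 E2.
  pose proof (admissible_norm_diag N Hadm) as Hdiag.
  set (bX := busemann_fun dX gX). set (bY := busemann_fun dY gY).
  pose proof (busemann_lipschitz dX gX HdX HrX) as LX.
  pose proof (busemann_lipschitz dY gY HdY HrY) as LY.
  pose proof (busemann_has_vertical_lines dX gX HdX HrX HbX HcX HpX) as VX.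
  pose proof (busemann_has_vertical_lines dY gY HdY HrY HbY HcY HpY) as VY.
  unfold in_hprod, height in E1, E2.
  destruct (Rle_or_lt (dX x1 x2) (dY y1 y2)).
  - rewrite Rmin_left by lra.
    destruct (hprod_path dX dY bX bY HdX HdY (proj1 HbX) (proj1 HbY) LX LY VX VY x1 y1 x2 y2)
      as [L [pX [pY [HL [P0 [Q0 [PL [QL [LpX [LpY Hh]]]]]]]]]]; try (unfold bX, bY; lra).
    eapply Rbar_le_trans;
      [apply (d_hprod_le_lipschitz_path dX dY N HdX HdY Hmono Hdiag gX gY x1 y1 x2 y2 L pX pY)|];
      simpl; auto; lra.
  - rewrite Rmin_right by lra.
    destruct (hprod_path dY dX bY bX HdY HdX (proj1 HbY) (proj1 HbX) LY LX VY VX y1 x1 y2 x2)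
      as [L [pY [pX [HL [Q0 [P0 [QL [PL [LpY [LpX Hh]]]]]]]]]]; try (unfold bX, bY; lra).
    eapply Rbar_le_trans;
      [apply (d_hprod_le_lipschitz_path dX dY N HdX HdY Hmono Hdiag gX gY x1 y1 x2 y2 L pX pY)|];
      simpl; auto; try lra.
    intros r Hr. specialize (Hh r Hr). unfold bX, bY in Hh. lra.
Qed.
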